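(* Let $G$ be a classical algebraic group over an algebraically closed field $k$ with natural module $V$ of dimension $n$. Let $C_1,\dots,C_e$ be conjugacy classes of $G$, $\Omega=C_1\times\dots\times C_e$, and let $\gamma_i$ be the dimension of the largest eigenspace on $V$ of an element of $C_i$. If $\sum_{i=1}^e\gamma_i>n(e-1)$, then no tuple $(x_1,\dots,x_e)\in\Omega$ generates a Zariski dense subgroup of $G$. *)

From HB Require Import structures.
From mathcomp Require Import all_boot all_order all_algebra.
From mathcomp Require Import mpoly.
Set Implicit Arguments. Unset Strict Implicit. Unset Printing Implicit Defensive.
Import GRing.Theory.
Local Open Scope ring_scope.

(* The three families of classical groups on the natural module V = k^n
   (column vectors), w.r.t. the standard forms. *)
Inductive classical_kind := SLkind | Spkind | SOkind.

Section Classical.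
Variable k : fieldType.
Variable n : nat.

Definition symp_form : 'M[k]_n :=
  \matrix_(i, j)
    (if (i < n./2)%N && (j == (i + n./2)%N :> nat) then 1
     else if (j < n./2)%N && (i == (j + n./2)%N :> nat) then -1 else 0).

(* standard quadratic form Q(v) = sum_{i<m} v_i v_{i+m} (+ v_{n-1}^2 if n odd),
   given by an upper-triangular matrix B, Q(v) = v^T B v. *)
Definition quad_mx : 'M[k]_n :=
  \matrix_(i, j)
    (((i < n./2)%N && (j == (i + n./2)%N :> nat))
     || [&& odd n, i == n.-1 :> nat & j == n.-1 :> nat])%:R.

Definition qform (v : 'cV[k]_n) : k := (v^T *m quad_mx *m v) 0 0.

Definition classical_group (t : classical_kind) (g : 'M[k]_n) : Prop :=
  g \in unitmx /\
  match t with
  | SLkind => \det g = 1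
  | Spkind => g^T *m symp_form *m g = symp_form
  | SOkind =>
      (forall v : 'cV[k]_n, qform (g *m v) = qform v) /\
      (* SO = identity component of O(Q): det = 1 if char k <> 2,
         Dickson invariant rank(1 - g) mod 2 = 0 if char k = 2 *)
      (if 2%N \in [pchar k] then ~~ odd (\rank (1%:M - g)) = true else \det g = 1)
  end.

Definition classical_admissible (t : classical_kind) : Prop :=
  match t with
  | SLkind => (2 <= n)%N
  | Spkind => (2 <= n)%N /\ ~~ odd n
  | SOkind => (3 <= n)%N /\ ~ (odd n /\ 2%N \in [pchar k])
  end.

Definition conj_class (G : 'M[k]_n -> Prop) (c : 'M[k]_n) : 'M[k]_n -> Prop :=
  fun y => exists2 g, G g & y = g *m c *m invmx g.

Definition largest_eigdim (x : 'M[k]_n) (d : nat) : Prop :=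
  (exists a : k, \rank (eigenspace x a) = d) /\
  (forall a : k, (\rank (eigenspace x a) <= d)%N).

Inductive gen_by (e : nat) (x : 'I_e -> 'M[k]_n) : 'M[k]_n -> Prop :=
  | gen_one : gen_by x 1%:M
  | gen_mul i h : gen_by x h -> gen_by x (x i *m h)
  | gen_inv i h : gen_by x h -> gen_by x (invmx (x i) *m h).

Definition mx_eval (p : {mpoly k[n * n]}) (A : 'M[k]_n) : k :=
  p.@[fun i => mxvec A 0 i].

(* S is Zariski dense in G (G is Zariski closed in M_n(k), so its Zariski
   topology is induced by polynomial functions in the matrix entries) *)
Definition zariski_dense (S G : 'M[k]_n -> Prop) : Prop :=
  forall p : {mpoly k[n * n]},
    (forall h, S h -> mx_eval p h = 0) -> forall g, G g -> mx_eval p g = 0.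

End Classical.

From HB Require Import structures.
From mathcomp Require Import all_boot all_order all_algebra.
From mathcomp Require Import mpoly.
From mathcomp Require Import zify ring.
Import GRing.Theory.
Local Open Scope ring_scope.

(* Choose eigenvalues a_i of the x_i whose eigenspaces have dimension gam_i.
   These eigenspaces have codimensions n - gam_i summing to less than n, so they
   share a nonzero vector u; MathComp eigenspaces are spaces of row vectors, so u
   spans a line of the dual of V that every element of <x_1, ..., x_e> stabilises.
   Stabilising this line is a Zariski-closed condition (the 2x2 minors of u and
   u h vanish), so density would force the whole classical group to stabilise it.
   But every classical group contains a transvection or an Eichler-Siegel
   transformation moving any given line. *)

Section Eigenspaces.
Variables (k : fieldType) (n : nat).

Lemma leq_sum_mxrank_bigcap {e} (E : 'I_e -> 'M[k]_n) :
  (\sum_(i < e) \rank (E i) + n <= \rank (\bigcap_(i < e) E i)%MS + n * e)%N.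
Proof.
elim: e E => [|e IHe] E; first by rewrite !big_ord0 mxrank1 muln0 addn0.
rewrite !big_ord_recr /= mulnS.
set X := (\bigcap_(i < e) _)%MS.
have := IHe (fun i => E (widen_ord (leqnSn e) i)); rewrite -/X.
have := mxrank_sum_cap X (E ord_max); have := rank_leq_col (X + E ord_max)%MS.
set q := (n * e)%N; set s := (\sum_(i < e) _)%N; lia.
Qed.

Lemma common_eigenvector e (x : 'I_e -> 'M[k]_n) (a : 'I_e -> k) (gam : 'I_e -> nat) :
  (forall i, gam i <= \rank (eigenspace (x i) (a i)))%N ->
  (n * (e - 1) < \sum_(i < e) gam i)%N ->
  exists2 u : 'rV[k]_n, u != 0 & forall i, (u <= eigenspace (x i) (a i))%MS.
Proof.
case: e x a gam => [|e] x a gam le_gam; first by rewrite big_ord0.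
set V := (\bigcap_(i < e.+1) eigenspace (x i) (a i))%MS => big_sum.
have /rowV0Pn[u sub_uV nz_u] : V != 0.
  have : (\sum_(i < e.+1) gam i <= \sum_(i < e.+1) \rank (eigenspace (x i) (a i)))%N.
    by apply: leq_sum => i _.
  have := leq_sum_mxrank_bigcap (fun i => eigenspace (x i) (a i)).
  by move: big_sum; rewrite -/V -mxrank_eq0 subn1 mulnS; set q := (n * e)%N; lia.
by exists u => // i; apply: submx_trans sub_uV _; apply: bigcapmx_inf.
Qed.

Lemma mxrank_eigenspace_conj (g c : 'M[k]_n) a : g \in unitmx ->
  \rank (eigenspace (g *m c *m invmx g) a) = \rank (eigenspace c a).
Proof.
have le_conj (h d : 'M[k]_n) : h \in unitmx ->
    (\rank (eigenspace d a) <= \rank (eigenspace (h *m d *m invmx h) a))%N.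
  move=> h_unit; rewrite -(mxrankMfree _ (_ : row_free (invmx h))); last first.
    by rewrite row_free_unit unitmx_inv.
  apply/mxrankS/eigenspaceP; rewrite !mulmxA mulmxKV //.
  by have /eigenspaceP -> := submx_refl (eigenspace d a); rewrite scalemxAl.
move=> g_unit; apply/eqP; rewrite eqn_leq le_conj // andbT.
have := le_conj (invmx g) (g *m c *m invmx g); rewrite unitmx_inv invmxK.
by rewrite !mulmxA mulVmx // mul1mx mulmxKV //; apply.
Qed.

End Eigenspaces.
Arguments common_eigenvector {k n e x a gam}.

Section StableLines.
Variables (k : fieldType) (n : nat).

Lemma stablemx_invmx m (V : 'M[k]_(m, n)) (f : 'M[k]_n) :
  f \in unitmx -> stablemx V f -> stablemx V (invmx f).
Proof.
move=> f_unit Vf_V.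
have eq_Vf : (V *m f == V)%MS.
  by rewrite -mxrank_leqif_eq // mxrankMfree // row_free_unit.
by rewrite -{2}(mulmxK f_unit V) submxMr // (eqmxP eq_Vf).
Qed.

Lemma gen_by_stablemx m e (x : 'I_e -> 'M[k]_n) (V : 'M[k]_(m, n)) :
  (forall i, x i \in unitmx) -> (forall i, stablemx V (x i)) ->
  forall h, gen_by x h -> stablemx V h.
Proof.
move=> x_unit Vx h; elim=> [|i {}h _ Vh|i {}h _ Vh]; first exact: stablemxC.
- exact: stablemxM.
- by apply: stablemxM => //; apply: stablemx_invmx.
Qed.

(* The 2x2 minors of the rows u and u *m A; when u != 0 they all vanish iff
   u *m A lies on the line of u. *)
Definition minor_poly (u : 'rV[k]_n) (j l : 'I_n) : {mpoly k[n * n]} :=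
  \sum_(r < n) ((u 0 r * u 0 j) *: 'X_(mxvec_index r l)
                - (u 0 r * u 0 l) *: 'X_(mxvec_index r j)).

Lemma mx_eval_minor_poly u j l A :
  mx_eval (minor_poly u j l) A = (u *m A) 0 l * u 0 j - (u *m A) 0 j * u 0 l.
Proof.
rewrite /mx_eval /minor_poly raddf_sum /= !mxE !big_distrl /= -sumrB.
by apply: eq_bigr => r _; rewrite mevalB !mevalZ !mevalXU !mxvecE; ring.
Qed.

Lemma zariski_dense_stablemx (S G : 'M[k]_n -> Prop) (u : 'rV[k]_n) :
  u != 0 -> (forall h, S h -> stablemx u h) -> zariski_dense S G ->
  forall g, G g -> stablemx u g.
Proof.
move=> /rV0Pn[j nz_uj] Su dense_S g Gg.
apply/sub_rVP; exists ((u *m g) 0 j / u 0 j); apply/rowP => l; rewrite [(_ *: u) 0 l]mxE.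
have /eqP : mx_eval (minor_poly u j l) g = 0.
  apply: dense_S Gg => h /Su/sub_rVP[b uh].
  by rewrite mx_eval_minor_poly uh !mxE; ring.
rewrite mx_eval_minor_poly subr_eq0 => /eqP minor0.
by apply: (mulIf nz_uj); rewrite minor0 mulrAC divfK.
Qed.

End StableLines.
Arguments zariski_dense_stablemx {k n S G u}.

Section Transvections.
Variables (k : fieldType) (n : nat).

Lemma delta_mulmx_cV m (r : 'I_m) (s : 'I_n) (v : 'cV[k]_n) :
  delta_mx r s *m v = v s 0 *: delta_mx r 0.
Proof.
apply/matrixP => x y; rewrite (ord1 y) !mxE (bigD1 s) //= big1 ?addr0.
  by rewrite mxE eqxx andbT mulrC.
by move=> i /negPf ni; rewrite mxE ni andbF mul0r.
Qed.

Lemma rV_mulmx_delta p (u : 'rV[k]_n) (r : 'I_n) (s : 'I_p) :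
  u *m delta_mx r s = u 0 r *: delta_mx 0 s.
Proof.
apply/trmx_inj; rewrite trmx_mul !linearZ /= !trmx_delta delta_mulmx_cV.
by rewrite mxE.
Qed.

Definition transvection r s (c : k) : 'M[k]_n := 1%:M + c *: delta_mx r s.

Lemma tr_transvection r s c : (transvection r s c)^T = transvection s r c.
Proof. by rewrite /transvection linearD linearZ /= trmx1 trmx_delta. Qed.

Lemma det_transvection r s c : r != s -> \det (transvection r s c) = 1.
Proof.
have det_lower (i j : 'I_n) : (j < i)%N -> \det (transvection i j c) = 1.
  move=> lt_ji; have ne_ij : i != j by rewrite neq_ltn lt_ji orbT.
  rewrite det_trig.
    apply: big1 => l _; rewrite !mxE eqxx.
    by case: eqP => [->|] /=; rewrite ?(negPf ne_ij) mulr0 addr0.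
  apply/forallP => x; apply/forallP => y; apply/implyP => lt_xy.
  rewrite !mxE; have /negPf-> : x != y by rewrite neq_ltn lt_xy.
  case: (eqVneq x i) => [ex|]; case: (eqVneq y j) => [ey|] /=; rewrite ?mulr0 ?addr0 //.
  by move: lt_xy; rewrite ex ey ltnNge (ltnW lt_ji).
move=> ne_rs; case: (ltngtP r s) => [lt_rs|lt_sr|eq_rs]; last 2 first.
- exact: det_lower.
- by move: ne_rs; rewrite -val_eqE /= eq_rs eqxx.
by rewrite -det_tr tr_transvection det_lower.
Qed.

Lemma transvection_unit r s c : r != s -> transvection r s c \in unitmx.
Proof. by move=> ne_rs; rewrite unitmxE det_transvection ?unitr1. Qed.

Lemma rV_mulmx_transvection (u : 'rV[k]_n) r s c l :
  (u *m transvection r s c) 0 l = u 0 l + c * u 0 r * (l == s)%:R.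
Proof. by rewrite mulmxDr mulmx1 -scalemxAr rV_mulmx_delta !mxE eqxx mulrA. Qed.

Lemma not_stablemx_shear (u : 'rV[k]_n) g j l c :
  u 0 j != 0 -> c != 0 ->
  (u *m g) 0 j = u 0 j -> (u *m g) 0 l = u 0 l + c * u 0 j -> ~~ stablemx u g.
Proof.
move=> nz_uj nz_c gj gl; apply/negP => /sub_rVP[a ug].
move: gj gl; rewrite ug !mxE -[X in _ = X]mul1r => /(mulIf nz_uj) ->.
rewrite mul1r => /esym/eqP.
by rewrite addrC -subr_eq0 addrK mulf_eq0 (negPf nz_c) (negPf nz_uj).
Qed.

Lemma transvection_not_stablemx (u : 'rV[k]_n) r s c :
  u 0 r != 0 -> r != s -> c != 0 -> ~~ stablemx u (transvection r s c).
Proof.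
move=> nz_ur ne_rs nz_c; apply: (not_stablemx_shear _ _ _ s _ nz_ur nz_c).
  by rewrite rV_mulmx_transvection (negPf ne_rs) mulr0 addr0.
by rewrite rV_mulmx_transvection eqxx mulr1.
Qed.

Lemma transvection_alt_form (J : 'M[k]_n) r s c :
  r != s -> J^T = - J -> (forall y, y != s -> J r y = 0) ->
  (transvection r s c)^T *m J *m transvection r s c = J.
Proof.
move=> ne_rs alt_J row_J.
have rowJ : row r J = J r s *: delta_mx 0 s.
  apply/rowP => y; rewrite !mxE eqxx /=.
  by case: (eqVneq y s) => [->|/row_J->]; rewrite ?mulr1 ?mulr0.
have EJ : delta_mx s r *m J = J r s *: delta_mx s s.
  by rewrite -(mul_delta_mx (0 : 'I_1)) -mulmxA -rowE rowJ -scalemxAr mul_delta_mx.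
have colJ : col r J = - J r s *: delta_mx s 0.
  apply/colP => x; have := congr1 (fun M : 'M[k]_n => M r x) alt_J.
  rewrite !mxE eqxx andbT => ->.
  by case: (eqVneq x s) => [->|/row_J->]; rewrite ?mulr1 ?mulr0 ?oppr0.
have JE : J *m delta_mx r s = - J r s *: delta_mx s s.
  by rewrite -(mul_delta_mx (0 : 'I_1)) mulmxA -colE colJ -scalemxAl mul_delta_mx.
rewrite tr_transvection /transvection mulmxDl mul1mx -scalemxAl EJ.
rewrite mulmxDr mulmx1 mulmxDl -!scalemxAr JE -!scalemxAl mul_delta_mx_0 1?eq_sym //.
by rewrite !scaler0 addr0 scaleNr scalerN addrK.
Qed.

Lemma mxrank_delta_sub m p (r1 r2 : 'I_m) (s1 s2 : 'I_p) : r1 != r2 -> s1 != s2 ->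
  \rank (delta_mx r1 s1 - delta_mx r2 s2 : 'M[k]_(m, p)) = 2%N.
Proof.
move=> ne_r ne_s; apply/eqP; rewrite eqn_leq; apply/andP; split.
  by apply: leq_trans (mxrank_add _ _) _; rewrite mxrank_opp !mxrank_delta.
set A := _ - _.
(* Rows r1, r2 and columns s1, s2 of A form an invertible 2x2 minor. *)
have RA : (delta_mx 0 r1 + delta_mx 1 r2) *m A = delta_mx 0 s1 - delta_mx 1 s2 :> 'M_(2, p).
  rewrite mulmxDl !mulmxBr !mul_delta_mx_cond !eqxx (negPf ne_r) eq_sym (negPf ne_r).
  by rewrite !mulr0n !mulr1n subr0 sub0r.
pose C : 'M[k]_(p, 2) := delta_mx s1 0 - delta_mx s2 1.
have RAC : (delta_mx 0 s1 - delta_mx 1 s2) *m C = 1%:M.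
  rewrite !(mulmxDl, mulmxDr, mulmxN, mulNmx) !mul_delta_mx_cond !eqxx.
  rewrite (negPf ne_s) eq_sym (negPf ne_s).
  rewrite !mulr0n !mulr1n subr0 oppr0 sub0r opprK.
  by rewrite mx1_sum_delta !big_ord_recr big_ord0 /= add0r.
rewrite -[2%N](mxrank1 k 2) -RAC -RA.
exact: leq_trans (mxrankM_maxl _ _) (mxrankM_maxr _ _).
Qed.

End Transvections.
Arguments transvection {k n}.
Arguments not_stablemx_shear {k n}.

Lemma n_half_half n : n = (n./2 + n./2 + odd n)%N.
Proof. by rewrite addnn -[LHS]odd_double_half addnC. Qed.

Section Partner.
Variable n : nat.
Local Notation m := n./2.

Lemma partner_subproof (j : 'I_n) : ((if j < m then j + m else j - m) < n)%N.
Proof. by have := n_half_half n; have := ltn_ord j; case: ifP; lia. Qed.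

(* The standard forms pair e_j with e_(j + m), where m = n./2. *)
Definition partner (j : 'I_n) : 'I_n := Ordinal (partner_subproof j).

End Partner.
Arguments partner {n}.

Ltac index_lia n :=
  have := n_half_half n; rewrite -?val_eqE /=; repeat case: ifP; lia.

Section Forms.
Variables (k : fieldType) (n : nat).
Local Notation m := n./2.
Local Notation J := (symp_form k n).
Local Notation Q := (quad_mx k n).

Lemma tr_symp_form : J^T = - J.
Proof.
apply/matrixP => i j; rewrite !mxE.
by do !case: ifP => ?; rewrite ?opprK ?oppr0 //; index_lia n.
Qed.

Lemma symp_form_partner (j y : 'I_n) : y != partner j -> J j y = 0.
Proof. by rewrite mxE; do !case: ifP => //; index_lia n. Qed.

Lemma quad_mx_hyperbolic_diag (r : 'I_n) : (r < m + m)%N -> Q r r = 0.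
Proof. by move=> lt_r; rewrite mxE (_ : _ || _ = false) //; move: lt_r; index_lia n. Qed.

Lemma quad_mx_hyperbolic_polar (r y : 'I_n) :
  (r < m + m)%N -> Q r y + Q y r = (y == partner r)%:R.
Proof. by move=> lt_r; rewrite !mxE -natrD; congr _%:R; move: lt_r; index_lia n. Qed.

Lemma quad_mx_anisotropic (z y : 'I_n) : z = m + m :> nat ->
  Q z z = 1 /\ Q z y + Q y z = (y == z)%:R *+ 2.
Proof.
move=> def_z; rewrite !mxE -natrD -mulrnA; split.
  by rewrite (_ : _ || _ = true) //; move: def_z (ltn_ord z); index_lia n.
by congr _%:R; move: def_z (ltn_ord z); index_lia n.
Qed.

Local Notation e_ r := (delta_mx r 0 : 'cV[k]_n).

Definition qpolar (v w : 'cV[k]_n) : k := (v^T *m (Q + Q^T) *m w) 0 0.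

Lemma mx11_tr (A : 'M[k]_1) : A^T 0 0 = A 0 0.
Proof. by rewrite mxE. Qed.

Lemma qformD (v w : 'cV[k]_n) : qform (v + w) = qform v + qform w + qpolar v w.
Proof.
rewrite /qform /qpolar [(v + w)^T]linearD !(mulmxDl, mulmxDr) ![(_ + _ : 'M_1) 0 0]mxE.
rewrite -[(w^T *m Q *m v) 0 0]mx11_tr !trmx_mul trmxK mulmxA; ring.
Qed.

Lemma qformZ (a : k) (v : 'cV[k]_n) : qform (a *: v) = a ^+ 2 * qform v.
Proof.
rewrite /qform [(a *: v)^T]linearZ -!scalemxAl -scalemxAr.
by rewrite ![(_ *: _ : 'M_1) 0 0]mxE mulrA expr2.
Qed.

Lemma qpolarDr (v w1 w2 : 'cV[k]_n) : qpolar v (w1 + w2) = qpolar v w1 + qpolar v w2.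
Proof. by rewrite /qpolar mulmxDr [(_ + _ : 'M_1) 0 0]mxE. Qed.

Lemma qpolarZr (a : k) (v w : 'cV[k]_n) : qpolar v (a *: w) = a * qpolar v w.
Proof. by rewrite /qpolar -scalemxAr [(_ *: _ : 'M_1) 0 0]mxE. Qed.

Lemma qpolarC (v w : 'cV[k]_n) : qpolar v w = qpolar w v.
Proof.
by rewrite /qpolar -mx11_tr !trmx_mul trmxK mulmxA linearD /= trmxK addrC.
Qed.

Lemma qpolar_delta (v : 'cV[k]_n) (r : 'I_n) :
  qpolar v (e_ r) = \sum_y v y 0 * (Q y r + Q r y).
Proof.
by rewrite /qpolar -colE !mxE; apply: eq_bigr => y _; rewrite !mxE.
Qed.

Lemma qform_delta (r : 'I_n) : qform (e_ r) = Q r r.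
Proof.
by rewrite /qform trmx_delta -rowE rV_mulmx_delta !mxE eqxx mulr1.
Qed.

Lemma qform_add2 (v : 'cV[k]_n) (a b : k) (r s : 'I_n) :
  qform (v + (a *: e_ r + b *: e_ s)) =
  qform v + a * qpolar v (e_ r) + b * qpolar v (e_ s)
  + a ^+ 2 * Q r r + b ^+ 2 * Q s s + a * b * (Q r s + Q s r).
Proof.
rewrite !qformD !qformZ !qform_delta !qpolarDr !qpolarZr qpolarC qpolarZr.
rewrite qpolar_delta (bigD1 s) //= big1 => [|y /negPf ne_ys]; last first.
  by rewrite [delta_mx s 0 y 0]mxE ne_ys mul0r.
by rewrite [delta_mx s 0 s 0]mxE !eqxx /=; ring.
Qed.

Lemma qpolar_hyperbolic (v : 'cV[k]_n) (r : 'I_n) :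
  (r < m + m)%N -> qpolar v (e_ r) = v (partner r) 0.
Proof.
move=> lt_r; rewrite qpolar_delta (bigD1 (partner r)) //= big1 => [|y ne_y].
  by rewrite addrC (addrC (Q _ r)) quad_mx_hyperbolic_polar // eqxx mulr1 add0r.
by rewrite (addrC (Q _ r)) quad_mx_hyperbolic_polar // (negPf ne_y) mulr0.
Qed.

Lemma qpolar_anisotropic (v : 'cV[k]_n) (z : 'I_n) :
  z = m + m :> nat -> qpolar v (e_ z) = v z 0 *+ 2.
Proof.
move=> def_z; rewrite qpolar_delta (bigD1 z) //= big1 => [|y ne_yz].
  by have [_ ->] := quad_mx_anisotropic z z def_z; rewrite eqxx addr0 mulr_natr.
have [_] := quad_mx_anisotropic z y def_z; rewrite addrC => ->.
by rewrite (negPf ne_yz) mul0rn mulr0.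
Qed.

End Forms.
Arguments quad_mx_anisotropic {k n}.
Arguments qpolar_hyperbolic {k n}.
Arguments qpolar_anisotropic {k n}.

Section OrthogonalElements.
Variables (k : fieldType) (n : nat).
Local Notation m := n./2.
Local Notation e_ r := (delta_mx r 0 : 'cV[k]_n).

(* Eichler-Siegel transformations: siegel r1 (partner r2) r2 (partner r1) acts along
   the totally singular plane spanned by e_r1 and e_r2, eichler (partner q) q z along
   the singular e_q and the anisotropic e_z of odd dimension. *)
Definition siegel (r1 s1 r2 s2 : 'I_n) : 'M[k]_n :=
  1%:M + delta_mx r1 s1 - delta_mx r2 s2.

Lemma siegel_transvections r1 s1 r2 s2 : s1 != r2 ->
  siegel r1 s1 r2 s2 = transvection r1 s1 1 *m transvection r2 s2 (-1).
Proof.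
move=> ne_s1r2; rewrite /siegel /transvection mulmxDl !mulmxDr !mul1mx mulmx1.
by rewrite -scalemxAr -scalemxAl mul_delta_mx_0 // !scaler0 addr0 scale1r scaleN1r addrAC.
Qed.

Lemma det_siegel r1 s1 r2 s2 : r1 != s1 -> r2 != s2 -> s1 != r2 ->
  \det (siegel r1 s1 r2 s2) = 1.
Proof.
by move=> ne1 ne2 ne3; rewrite siegel_transvections // det_mulmx !det_transvection // mulr1.
Qed.

Lemma mxrank_sub1_siegel r1 s1 r2 s2 : r1 != r2 -> s1 != s2 ->
  \rank (1%:M - siegel r1 s1 r2 s2) = 2%N.
Proof.
move=> ne_r ne_s.
have -> : 1%:M - siegel r1 s1 r2 s2 = delta_mx r2 s2 - delta_mx r1 s1.
  by apply/matrixP => i j; rewrite !mxE; ring.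
by rewrite mxrank_delta_sub // eq_sym.
Qed.

Lemma siegel_mulmx_cV r1 s1 r2 s2 (v : 'cV[k]_n) :
  siegel r1 s1 r2 s2 *m v = v + (v s1 0 *: e_ r1 + (- v s2 0) *: e_ r2).
Proof. by rewrite /siegel mulmxBl mulmxDl mul1mx !delta_mulmx_cV scaleNr addrA. Qed.

Lemma rV_mulmx_siegel r1 s1 r2 s2 (u : 'rV[k]_n) l :
  (u *m siegel r1 s1 r2 s2) 0 l = u 0 l + u 0 r1 * (l == s1)%:R - u 0 r2 * (l == s2)%:R.
Proof. by rewrite /siegel mulmxBr mulmxDr mulmx1 !rV_mulmx_delta !mxE !eqxx. Qed.

Lemma qform_siegel (r1 r2 : 'I_n) (v : 'cV[k]_n) :
  (r1 < m + m)%N -> (r2 < m + m)%N -> r2 != partner r1 ->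
  qform (siegel r1 (partner r2) r2 (partner r1) *m v) = qform v.
Proof.
move=> lt_r1 lt_r2 ne_r2; rewrite siegel_mulmx_cV qform_add2 !qpolar_hyperbolic //.
rewrite !quad_mx_hyperbolic_diag // quad_mx_hyperbolic_polar // (negPf ne_r2).
by rewrite !mulr0 !addr0 mulNr mulrC addrK.
Qed.

Lemma siegel_SO (r1 r2 : 'I_n) : ~~ odd n -> r1 != r2 -> r2 != partner r1 ->
  classical_group SOkind (siegel r1 (partner r2) r2 (partner r1)).
Proof.
move=> /negPf even_n ne_r ne_r2; have := n_half_half n; rewrite even_n addn0 => def_n.
have [lt_r1 lt_r2] : (r1 < m + m)%N /\ (r2 < m + m)%N by rewrite -def_n.
have det1 : \det (siegel r1 (partner r2) r2 (partner r1)) = 1.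
  by apply: det_siegel; move: ne_r ne_r2; index_lia n.
split; first by rewrite unitmxE det1 unitr1.
split; first by move=> v; apply: qform_siegel.
case: ifP => // _; rewrite mxrank_sub1_siegel //; move: ne_r; index_lia n.
Qed.

Definition eichler (p q z : 'I_n) : 'M[k]_n :=
  1%:M - delta_mx q p - 2%:R *: delta_mx q z + delta_mx z p.

Lemma eichler_transvections p q z : p != q -> q != z ->
  eichler p q z = transvection q z (- 2%:R) *m transvection z p 1 *m transvection q p 1.
Proof.
move=> ne_pq ne_qz; rewrite /eichler /transvection !(mulmxDl, mulmxDr) !mul1mx !mulmx1.
do 2!rewrite -?scalemxAl -?scalemxAr ?mul_delta_mx_cond ?eqxx ?mulr1n.
rewrite (negPf ne_pq) eq_sym (negPf ne_qz) !mulr0n !scaler0 !addr0.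
by apply/matrixP => x y; rewrite !mxE; ring.
Qed.

Lemma det_eichler p q z : p != q -> q != z -> z != p -> \det (eichler p q z) = 1.
Proof.
move=> ne_pq ne_qz ne_zp; rewrite eichler_transvections // !det_mulmx.
by rewrite !det_transvection // 1?eq_sym // !mulr1.
Qed.

Lemma eichler_mulmx_cV p q z (v : 'cV[k]_n) :
  eichler p q z *m v = v + ((- v p 0 - 2%:R * v z 0) *: e_ q + v p 0 *: e_ z).
Proof.
rewrite /eichler !(mulmxDl, mulNmx) mul1mx -scalemxAl !delta_mulmx_cV scalerA.
by rewrite scalerDl !scaleNr !addrA.
Qed.

Lemma rV_mulmx_eichler p q z (u : 'rV[k]_n) l :
  (u *m eichler p q z) 0 l =
  u 0 l - u 0 q * (l == p)%:R - 2%:R * u 0 q * (l == z)%:R + u 0 z * (l == p)%:R.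
Proof.
rewrite /eichler !(mulmxDr, mulmxN) mulmx1 -scalemxAr !rV_mulmx_delta !mxE !eqxx.
by rewrite mulrA.
Qed.

Lemma qform_eichler (q z : 'I_n) (v : 'cV[k]_n) :
  (q < m + m)%N -> z = m + m :> nat ->
  qform (eichler (partner q) q z *m v) = qform v.
Proof.
move=> lt_q def_z; have [Qzz _] := quad_mx_anisotropic (k := k) z z def_z.
rewrite eichler_mulmx_cV qform_add2 qpolar_hyperbolic // (qpolar_anisotropic _ _ def_z).
rewrite quad_mx_hyperbolic_diag // quad_mx_hyperbolic_polar // Qzz.
rewrite (_ : z == partner q = false); last by move: lt_q def_z; index_lia n.
by rewrite mulr0n -mulr_natr; ring.
Qed.

Lemma eichler_SO (q z : 'I_n) : ~~ (2%N \in [pchar k]) ->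
  (q < m + m)%N -> z = m + m :> nat ->
  classical_group SOkind (eichler (partner q) q z).
Proof.
move=> /negPf char_k lt_q def_z.
have det1 : \det (eichler (partner q) q z) = 1.
  by apply: det_eichler; move: lt_q def_z; index_lia n.
split; first by rewrite unitmxE det1 unitr1.
by split; [move=> v; apply: qform_eichler | rewrite char_k].
Qed.

End OrthogonalElements.
Arguments siegel {k n}.
Arguments eichler {k n}.

Section NoStableLine.
Variables (k : fieldType) (n : nat).
Local Notation m := n./2.

Definition no_stable_line (G : 'M[k]_n -> Prop) : Prop :=
  forall u : 'rV[k]_n, u != 0 -> exists2 g, G g & ~~ stablemx u g.

Lemma SL_no_stable_line : (1 < n)%N -> no_stable_line (classical_group SLkind).
Proof.
move=> lt1n u /rV0Pn[j nz_uj].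
have ne_j : j != partner j by rewrite eq_sym; move: lt1n; index_lia n.
exists (transvection j (partner j) 1).
  by split; [exact: transvection_unit | exact: det_transvection].
exact: transvection_not_stablemx (oner_neq0 k).
Qed.

Lemma Sp_no_stable_line : (1 < n)%N -> no_stable_line (classical_group Spkind).
Proof.
move=> lt1n u /rV0Pn[j nz_uj].
have ne_j : j != partner j by rewrite eq_sym; move: lt1n; index_lia n.
exists (transvection j (partner j) 1).
  split; first exact: transvection_unit.
  by apply: transvection_alt_form => //; [exact: tr_symp_form | exact: symp_form_partner].
exact: transvection_not_stablemx (oner_neq0 k).
Qed.

Lemma SO_even_no_stable_line : ~~ odd n -> (4 <= n)%N ->
  no_stable_line (classical_group SOkind).
Proof.
move=> even_n le4n u /rV0Pn[j nz_uj].
have def_n : n = (m + m)%N by rewrite [LHS]n_half_half (negPf even_n) addn0.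
(* An index r2 outside {j, partner j}: one of 0 and 1 will do, as m >= 2. *)
have lt_r2 : ((if (j == 0 :> nat) || (partner j == 0 :> nat) then 1 else 0) < n)%N.
  by case: ifP; lia.
pose r2 := Ordinal lt_r2.
have [ne_r ne_r2 ne_jr2 ne_jj ne_pp] : [/\ j != r2, r2 != partner j,
    j != partner r2, j != partner j & partner r2 != partner j].
  by rewrite /r2; split; move: def_n le4n (ltn_ord j); index_lia n.
exists (siegel j (partner r2) r2 (partner j)); first exact: siegel_SO.
apply: (not_stablemx_shear _ _ _ (partner r2) 1 nz_uj (oner_neq0 k)).
  by rewrite rV_mulmx_siegel (negPf ne_jr2) (negPf ne_jj) !mulr0 subr0 addr0.
by rewrite rV_mulmx_siegel eqxx (negPf ne_pp) mulr0 subr0 mulr1 mul1r.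
Qed.

Lemma SO_odd_no_stable_line : odd n -> (3 <= n)%N -> ~~ (2%N \in [pchar k]) ->
  no_stable_line (classical_group SOkind).
Proof.
move=> odd_n le3n char_k u nz_u.
have def_n : n = (m + m).+1 by rewrite [LHS]n_half_half odd_n /= addn1.
have lt_z : (m + m < n)%N by lia.
pose z := Ordinal lt_z.
have eichler_indices (q : 'I_n) : (q < m + m)%N ->
    [/\ q != partner q, q != z & z != partner q].
  by move=> lt_q; split; move: def_n lt_q; rewrite /z; index_lia n.
(* Either u has a nonzero hyperbolic coordinate u_q, and the Eichler transformation
   adds -2 u_q to the coordinate z, or u is supported on e_z, and it adds u_z to the
   coordinate partner q. *)
case: (pickP (fun q : 'I_n => (q < m + m)%N && (u 0 q != 0))) => [q | no_q].
  case/andP=> lt_q nz_uq.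
  have [ne_qp ne_qz ne_zp] := eichler_indices q lt_q.
  exists (eichler (partner q) q z); first exact: eichler_SO.
  have nz_2 : - 2%:R != 0 :> k.
    by rewrite oppr_eq0; apply: contraNneq char_k => two0; rewrite inE /= two0 eqxx.
  apply: (not_stablemx_shear _ _ _ z (- 2%:R) nz_uq nz_2).
    by rewrite rV_mulmx_eichler (negPf ne_qp) (negPf ne_qz) !mulr0 !subr0 addr0.
  rewrite rV_mulmx_eichler eqxx (negPf ne_zp) /= mulr0n mulr1n.
  by rewrite !mulr0 mulr1 subr0 addr0 mulNr.
have lt_q : (0 < n)%N by lia.
pose q := Ordinal lt_q.
have lt_q2 : (q < m + m)%N by rewrite /=; lia.
have [ne_qp ne_qz ne_zp] := eichler_indices q lt_q2.
have uq0 : u 0 q = 0 by move: (no_q q); rewrite lt_q2 => /negbFE/eqP.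
have nz_uz : u 0 z != 0.
  case/rV0Pn: nz_u => j nz_uj; suff -> : z = j by [].
  by apply: val_inj => /=; move: (no_q j) (ltn_ord j); rewrite nz_uj andbT; lia.
exists (eichler (partner q) q z); first exact: eichler_SO.
apply: (not_stablemx_shear _ _ _ (partner q) 1 nz_uz (oner_neq0 k)).
  by rewrite rV_mulmx_eichler (negPf ne_zp) eqxx uq0 /= mulr0n mulr1n; ring.
rewrite rV_mulmx_eichler [partner q == z]eq_sym (negPf ne_zp) eqxx uq0 /=.
by rewrite mulr0n mulr1n; ring.
Qed.

End NoStableLine.
Arguments no_stable_line {k n}.

Lemma classical_no_stable_line {k : fieldType} {n : nat} {t} :
  classical_admissible k n t -> no_stable_line (@classical_group k n t).
Proof.
case: t => /= [lt1n | [lt1n _] | [le3n not_odd2]].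
- exact: SL_no_stable_line.
- exact: Sp_no_stable_line.
case odd_n: (odd n).
  by apply: SO_odd_no_stable_line => //; apply/negP => char2; apply: not_odd2.
apply: SO_even_no_stable_line; first by rewrite odd_n.
by move: le3n; have := n_half_half n; rewrite odd_n; lia.
Qed.

Theorem lemma3p6 (k : closedFieldType) (t : classical_kind) (n e : nat)
    (c : 'I_e -> 'M[k]_n) (gam : 'I_e -> nat) :
  classical_admissible k n t ->
  (forall i, classical_group t (c i)) ->
  (forall i, largest_eigdim (c i) (gam i)) ->
  (n * (e - 1) < \sum_(i < e) gam i)%N ->
  forall x : 'I_e -> 'M[k]_n,
    (forall i, conj_class (@classical_group k n t) (c i) (x i)) ->
    ~ zariski_dense (gen_by x) (@classical_group k n t).
Proof.
move=> adm_t Gc eig_c big_gam x conj_x dense_x.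
have [a eig_a] : exists a : 'I_e -> k, forall i, \rank (eigenspace (c i) (a i)) = gam i.
  apply: (@fin_all_exists _ (fun=> k) (fun i a => \rank (eigenspace (c i) a) = gam i)).
  by move=> i; have [[a ?] _] := eig_c i; exists a.
have x_unit i : x i \in unitmx.
  have [g [g_unit _] ->] := conj_x i; have [c_unit _] := Gc i.
  by rewrite !unitmx_mul unitmx_inv g_unit c_unit.
have gam_x i : (gam i <= \rank (eigenspace (x i) (a i)))%N.
  by have [g [g_unit _] ->] := conj_x i; rewrite mxrank_eigenspace_conj // eig_a.
have [u nz_u eig_u] := common_eigenvector gam_x big_gam.
have [g Gg /negP[]] := classical_no_stable_line adm_t u nz_u.
apply: (zariski_dense_stablemx nz_u _ dense_x g Gg).
by apply: gen_by_stablemx => // i; apply/eigenvectorP; exists (a i).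
Qed.
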